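(* Let $\epsilon>0$, let $\Lambda_\epsilon\subset\mathbb{R}^d$ be an $\epsilon$-lattice with fixed basis $\mathbf{b}_1,\dots,\mathbf{b}_d$, and let $q$ be a positive integer. For any points $\boldsymbol\lambda_1\neq\boldsymbol\lambda_2\in\Lambda_\epsilon$ with $c_q(\boldsymbol\lambda_1)=c_q(\boldsymbol\lambda_2)$, we have $\|\boldsymbol\lambda_1-\boldsymbol\lambda_2\|\ge 2q\epsilon$.
   Context: $\|\cdot\|$ is a fixed one of the $\ell_1,\ell_2,\ell_\infty$ norms, and balls $B_r(\mathbf{x})$ are with respect to it. A lattice is the set of integer combinations of a basis $\mathbf{b}_1,\dots,\mathbf{b}_d$ of $\mathbb{R}^d$. Its packing radius $r_p$ is the supremum of $r$ such that $B_r(\boldsymbol\lambda)\cap B_r(\boldsymbol\lambda')=\emptyset$ for all distinct lattice points; its cover radius $r_c$ is the infimum of $r$ such that the balls $B_r(\boldsymbol\lambda)$ over lattice points cover $\mathbb{R}^d$. An $\epsilon$-lattice is a lattice with $\epsilon=r_p\le r_c\le 3\epsilon$. The coloring $c_q$: writing $\boldsymbol\lambda=\sum_i\alpha_i\mathbf{b}_i$ with $\alpha_i\in\mathbb{Z}$, set $c_q(\boldsymbol\lambda)=(\alpha_1\bmod q,\dots,\alpha_d\bmod q)$. *)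

From HB Require Import structures.
From mathcomp Require Import all_boot all_order all_algebra.
From mathcomp Require Import boolp classical_sets reals.
Set Implicit Arguments. Unset Strict Implicit. Unset Printing Implicit Defensive.
Import Order.TTheory GRing.Theory Num.Theory.
Local Open Scope ring_scope.
Local Open Scope classical_set_scope.

Inductive normKind := L1 | L2 | Linf.

Definition vnorm {R : realType} {d : nat} (p : normKind) (v : 'rV[R]_d) : R :=
  match p with
  | L1 => \sum_(i < d) `|v 0 i|
  | L2 => Num.sqrt (\sum_(i < d) (v 0 i) ^+ 2)
  | Linf => \big[Num.max/0]_(i < d) `|v 0 i|
  end.

Definition ball_p {R : realType} {d : nat} (p : normKind) (x : 'rV[R]_d) (r : R)
  : set 'rV[R]_d := [set y | vnorm p (y - x) <= r].

Definition is_basis {R : realType} {d : nat} (b : 'I_d -> 'rV[R]_d) : Prop :=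
  (\matrix_(i < d) b i) \in unitmx.

Definition lcomb {R : realType} {d : nat} (b : 'I_d -> 'rV[R]_d) (a : 'I_d -> int)
  : 'rV[R]_d := \sum_(i < d) (b i) *~ (a i).

Definition in_lattice {R : realType} {d : nat} (b : 'I_d -> 'rV[R]_d) (x : 'rV[R]_d)
  : Prop := exists a : 'I_d -> int, x = lcomb b a.

Definition packing_radius {R : realType} {d : nat} (p : normKind)
  (b : 'I_d -> 'rV[R]_d) : R :=
  sup [set r : R | forall l l', in_lattice b l -> in_lattice b l' -> l <> l' ->
         ball_p p l r `&` ball_p p l' r = set0].

Definition cover_radius {R : realType} {d : nat} (p : normKind)
  (b : 'I_d -> 'rV[R]_d) : R :=
  inf [set r : R | forall x : 'rV[R]_d, exists l, in_lattice b l /\ ball_p p l r x].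

Definition eps_lattice {R : realType} {d : nat} (p : normKind)
  (b : 'I_d -> 'rV[R]_d) (eps : R) : Prop :=
  is_basis b /\ packing_radius p b = eps /\
  packing_radius p b <= cover_radius p b <= 3 * eps.

(* Coloring c_q, on the (unique) coefficient vector of a lattice point. *)
Definition color (q : nat) {d : nat} (a : 'I_d -> int) : 'I_d -> int :=
  fun i => (a i %% q%:Z)%Z.

(* Equal colours mean that the coefficient vectors agree modulo q, so
   lambda_1 - lambda_2 = q mu for a nonzero lattice vector mu.  Any two distinct
   lattice points are at distance at least 2 r_p: for every admissible packing
   radius r the midpoint of the two points lies in both closed balls of radius r
   as soon as r exceeds half their distance, so half the distance bounds all
   admissible radii and hence their supremum r_p = epsilon. *)
From HB Require Import structures.
From mathcomp Require Import all_boot all_order all_algebra.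
From mathcomp Require Import boolp classical_sets reals.
From mathcomp Require Import ring.
Set Implicit Arguments. Unset Strict Implicit. Unset Printing Implicit Defensive.
Import Order.TTheory GRing.Theory Num.Theory.
Local Open Scope ring_scope.
Local Open Scope classical_set_scope.

Section Norm.
Variables (R : realType) (d : nat) (p : normKind).

Lemma vnormZ (k : R) (v : 'rV[R]_d) : vnorm p (k *: v) = `|k| * vnorm p v.
Proof.
case: p => /=.
- by rewrite mulr_sumr; apply: eq_bigr => i _; rewrite mxE normrM.
- rewrite -sqrtr_sqr -sqrtrM ?sqr_ge0 //; congr Num.sqrt.
  by rewrite mulr_sumr; apply: eq_bigr => i _; rewrite mxE exprMn.
- rewrite (big_endo (fun x => `|k| * x)) ?mulr0 //.
    by apply: eq_bigr => i _; rewrite mxE normrM.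
  by move=> x y; rewrite maxr_pMr.
Qed.

Lemma vnormN (v : 'rV[R]_d) : vnorm p (- v) = vnorm p v.
Proof. by rewrite -scaleN1r vnormZ normrN1 mul1r. Qed.

Lemma ball_p_midpoint (x y : 'rV[R]_d) (r : R) :
  vnorm p (x - y) <= 2 * r ->
  (ball_p p x r `&` ball_p p y r) (2^-1 *: (x + y)).
Proof.
have half_diff (u v : 'rV[R]_d) : 2^-1 *: (u + v) - u = 2^-1 *: (v - u).
  have uE : u = 2^-1 *: (u + u).
    by rewrite -mulr2n -scaler_nat scalerA mulVf ?pnatr_eq0 // scale1r.
  by rewrite {2}uE -scalerBr opprD addrACA subrr add0r.
have half_norm (u v : 'rV[R]_d) :
    vnorm p (u - v) <= 2 * r -> vnorm p (2^-1 *: (v - u)) <= r.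
  rewrite -opprB vnormN vnormZ ger0_norm ?invr_ge0 // => h.
  by rewrite ler_pdivrMl.
move=> hxy; split; rewrite /ball_p /=.
- by rewrite half_diff; exact: half_norm.
- rewrite [x + y]addrC half_diff; apply: half_norm.
  by rewrite -opprB vnormN.
Qed.

End Norm.

Section Lattice.
Variables (R : realType) (d : nat) (b : 'I_d -> 'rV[R]_d).

Lemma lcomb_in_lattice (a : 'I_d -> int) : in_lattice b (lcomb b a).
Proof. by exists a. Qed.

Lemma in_lattice0 : in_lattice b 0.
Proof. by exists (fun=> 0); rewrite /lcomb big1 // => i _; rewrite mulr0z. Qed.

Lemma lcombB (a1 a2 : 'I_d -> int) :
  lcomb b a1 - lcomb b a2 = lcomb b (fun i => a1 i - a2 i).
Proof. by rewrite /lcomb -sumrB; apply: eq_bigr => i _; rewrite mulrzBr. Qed.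

Lemma lcombMz (a : 'I_d -> int) (k : int) :
  lcomb b (fun i => a i * k) = k%:~R *: lcomb b a.
Proof.
rewrite /lcomb scaler_sumr; apply: eq_bigr => i _.
by rewrite mulrzA -scaler_int.
Qed.

Lemma packing_radius_le_half_dist (p : normKind) (l l' : 'rV[R]_d) :
  0 < packing_radius p b -> in_lattice b l -> in_lattice b l' -> l <> l' ->
  2 * packing_radius p b <= vnorm p (l - l').
Proof.
rewrite /packing_radius; set S := [set r : R | _] => pr_gt0 Ll Ll' neq.
(* [sup] of an empty set is [0], hence the positivity hypothesis. *)
have S_neq0 : S !=set0.
  apply/set0P/eqP => S0; move: pr_gt0; by rewrite S0 sup0 ltxx.
rewrite -ler_pdivlMl //; apply: ge_sup => // r Sr.
rewrite leNgt; apply/negP => /ltW; rewrite ler_pdivrMl // => hr.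
have := ball_p_midpoint hr.
by rewrite (Sr l l' Ll Ll' neq).
Qed.

End Lattice.

Lemma color_eq_sub (q d : nat) (a1 a2 : 'I_d -> int) :
  color q a1 = color q a2 ->
  forall i, a1 i - a2 i = ((a1 i %/ q%:Z)%Z - (a2 i %/ q%:Z)%Z) * q%:Z.
Proof.
move=> col i; have := congr1 (fun f => f i) col; rewrite /color => ci.
by rewrite {1}(divz_eq (a1 i) q%:Z) {1}(divz_eq (a2 i) q%:Z) ci; ring.
Qed.

Theorem lemma12 (R : realType) (d : nat) (p : normKind) (b : 'I_d -> 'rV[R]_d)
  (eps : R) (q : nat) :
  0 < eps -> eps_lattice p b eps -> (0 < q)%N ->
  forall a1 a2 : 'I_d -> int,
    lcomb b a1 <> lcomb b a2 ->
    color q a1 = color q a2 ->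
    2 * q%:R * eps <= vnorm p (lcomb b a1 - lcomb b a2).
Proof.
move=> eps_gt0 [_ [pr_eps _]] _ a1 a2 neq col.
set mu := lcomb b (fun i => (a1 i %/ q%:Z)%Z - (a2 i %/ q%:Z)%Z).
have diff : lcomb b a1 - lcomb b a2 = q%:R *: mu.
  by rewrite lcombB (funext (color_eq_sub col)) lcombMz.
have mu_neq0 : mu <> 0.
  by move=> mu0; apply: neq; apply/eqP; rewrite -subr_eq0 diff mu0 scaler0.
have mu_ge : 2 * eps <= vnorm p mu.
  rewrite -(subr0 mu) -pr_eps; apply: packing_radius_le_half_dist mu_neq0;
    by [rewrite pr_eps | exact: lcomb_in_lattice | exact: in_lattice0].
rewrite diff vnormZ ger0_norm ?ler0n // -mulrA mulrCA.
by rewrite ler_wpM2l.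
Qed.
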